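(* Let $n\ge 1$, $0\le r\le s\le n$ and $0\le k\le n-1$ be integers, with $k\ge 1$ if $r=s$. Then $$M_{r,s}^{n,k}=2\sum_t\sum_j(-1)^j\frac{s-j-r+1+2t}{n-1-j-2t}\binom{k}{2t+1}\binom{k-1-2t}{j}\binom{n-1-j-2t}{s-j}\binom{n-1-j-2t}{r-1-2t}+\frac{s-r}{n-k}\sum_j\binom{k}{j}\binom{n-k}{r-j}\binom{n-k}{s-j},$$ where all sums are over nonnegative integers $t,j$ (only finitely many terms are nonzero). In particular $M_{r,s}^{n,0}=\frac{s-r}{n}\binom{n}{r}\binom{n}{s}$ for $r<s$.
   Context: For $n\ge1$ and $0\le r\le n$, a lattice path from $(0,0)$ to $(r,n-r)$ is a sequence of lattice points $v_0=(0,0),\dots,v_n=(r,n-r)$ with each step $v_i-v_{i-1}\in\{(1,0),(0,1)\}$; its vertex set is $\{v_0,\dots,v_n\}$. $N_k^{n,r}$ denotes the number of ordered pairs of lattice paths from $(0,0)$ to $(r,n-r)$ whose vertex sets share exactly $k$ points other than $(0,0)$ and $(r,n-r)$. For $0\le r<s\le n$, $M_{r,s}^{n,k}$ is the number of pairs $(P,Q)$ with $P$ a lattice path from $(0,0)$ to $(r,n-r)$ and $Q$ a lattice path from $(0,0)$ to $(s,n-s)$ whose vertex sets share exactly $k$ points other than $(0,0)$. For $r=s$ and $k\ge1$, $M_{r,r}^{n,k}:=N_{k-1}^{n,r}$. Binomial coefficients $\binom{a}{b}$ with $a\ge 0$ are $0$ if $b<0$ or $b>a$. *)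

From mathcomp Require Import all_boot all_order all_algebra.
Set Implicit Arguments. Unset Strict Implicit. Unset Printing Implicit Defensive.
Import Order.TTheory GRing.Theory Num.Theory.

(* A lattice path with n unit steps is encoded by its step sequence:
   true = step (1,0), false = step (0,1). It ends at (r, n-r) iff it has
   exactly r true steps. *)
Definition lpath (n : nat) := (n.-tuple bool)%type.

Definition vtx n (P : lpath n) (i : nat) : nat * nat :=
  (count id (take i P), i - count id (take i P)).

Definition verts n (P : lpath n) : seq (nat * nat) :=
  [seq vtx P i | i <- iota 0 n.+1].

Definition ends_at n (P : lpath n) (r : nat) : bool := count id P == r.

Definition shared n (P Q : lpath n) (excl : seq (nat * nat)) : nat :=
  size [seq p <- undup (verts P) | (p \in verts Q) && (p \notin excl)].

Definition Ncount (n r k : nat) : nat :=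
  #|[set PQ : lpath n * lpath n |
      [&& ends_at PQ.1 r, ends_at PQ.2 r &
          shared PQ.1 PQ.2 [:: (0, 0); (r, n - r)] == k]]|.

Definition Mcount (n r s k : nat) : nat :=
  if r < s then
    #|[set PQ : lpath n * lpath n |
        [&& ends_at PQ.1 r, ends_at PQ.2 s &
            shared PQ.1 PQ.2 [:: (0, 0)] == k]]|
  else Ncount n r k.-1.

Definition binz (a b : int) : rat :=
  if (0 <= a)%R && (0 <= b)%R then (('C(absz a, absz b))%:R)%R else 0%R.

From mathcomp Require Import all_boot all_order all_algebra.
From mathcomp Require Import mpoly ring zify.
Import Order.TTheory GRing.Theory Num.Theory.
Set Implicit Arguments. Unset Strict Implicit. Unset Printing Implicit Defensive.

(* Removing the last step of both paths gives a recurrence for M^{n,k}_{r,s}.  View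
   functions on Z^3 as acted on by polynomials in the shifts X_n, X_r, X_s in (n, r, s).
   The determinant L(n,r,s) = C(n-1,r) C(n-1,s-1) - C(n-1,r-1) C(n-1,s), extended to Z^3
   with binomials of negative upper index, is killed by 1 - X_n (1 + X_r) (1 + X_s), which is
   the recurrence off the diagonal r = s, while each shared vertex on the diagonal costs
   T = X_n (1 + 2 X_r + X_r X_s); hence M^{n,k}_{r,s} = (T^k L)(n,r,s) and M^{n,0}_{r,s} = L.
   For A = 1 + X_n X_r - X_n X_s, B = 1 - X_n X_r - X_n X_s and C = X_n (1 + X_r X_s) both
   A - T and B - C equal 1 - X_n (1 + X_r) (1 + X_s), so T^k L = (A^k - B^k + C^k) L.
   Expanding binomially and using L(n,r,s) = (s-r)/n C(n,r) C(n,s) gives the formula. *)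

(* The i-th vertices of two paths lie on the antidiagonal x + y = i, so a common vertex
   other than the origin is an index 1 <= i <= n at which the prefixes have equal counts. *)
Definition nmeet (P Q : seq bool) : nat :=
  count (fun i => count id (take i P) == count id (take i Q)) (iota 1 (size P)).

Definition meet_pairs n r s k : nat :=
  \sum_(P : n.-tuple bool) \sum_(Q : n.-tuple bool)
    [&& count id P == r, count id Q == s & nmeet P Q == k].

(* Removing the last step of both paths; their last vertices coincide iff [r = s]. *)
Fixpoint npairs (n r s k : nat) : nat :=
  match n with
  | 0 => [&& r == 0, s == 0 & k == 0]
  | n'.+1 =>
    if (r == s) && (k == 0) then 0 else
    let k' := if r == s then k.-1 else k in
    npairs n' r s k' + (if r is r'.+1 then npairs n' r' s k' else 0)
    + (if s is s'.+1 then npairs n' r s' k' else 0)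
    + (if r is r'.+1 then if s is s'.+1 then npairs n' r' s' k' else 0 else 0)
  end.

Lemma npairsC n r s k : npairs n r s k = npairs n s r k.
Proof.
elim: n r s k => [|n IH] r s k /=; first by rewrite andbCA andbA.
rewrite [s == r]eq_sym; case: ifP => // _; move: (if _ then _ else _) => k'.
case: r => [|r]; case: s => [|s] //=.
- by rewrite (IH 0 s.+1) (IH 0 s); lia.
- by rewrite (IH r.+1 0) (IH r 0); lia.
- by rewrite (IH r.+1 s.+1) (IH r s.+1) (IH r.+1 s) (IH r s); lia.
Qed.

Lemma npairs_small n r s k : n < k -> npairs n r s k = 0.
Proof.
elim: n r s k => [|n IH] r s k ltnk /=; first by rewrite (gtn_eqF ltnk) !andbF.
case: ifP => // _.
have : (n < if r == s then k.-1 else k) by case: (r == s); lia.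
move: (if _ then _ else _) => k' ltnk'.
by case: r => [|r]; case: s => [|s]; rewrite ?IH.
Qed.

Lemma npairs_top n r s : npairs n r s n = (if r == s then 'C(n, r) else 0).
Proof.
elim: n r s => [|n IH] r s /=; first by case: r => [|r]; case: s => [|s] //=; case: ifP.
case: (eqVneq r s) => [<-|neq] /=.
  case: r => [|r]; first by rewrite IH eqxx !bin0 !addn0.
  by rewrite !IH eqxx (gtn_eqF (ltnSn r)) (ltn_eqF (ltnSn r)) eqxx binS; lia.
by case: r neq => [|r]; case: s => [|s] neq; rewrite ?npairs_small.
Qed.

Lemma npairs_diag0 n r : 0 < n -> npairs n r r 0 = 0.
Proof. by case: n => //= n _; rewrite eqxx. Qed.

Lemma npairsS_top n r s : r < s ->
  npairs n.+1 r s n = (if s == r.+1 then 'C(n, r) else 0).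
Proof.
move=> ltrs; rewrite /= (ltn_eqF ltrs) /=.
case: r ltrs => [|r]; case: s => [|s] //= ltrs; rewrite !npairs_top.
  by case: s {ltrs} => [|s]; rewrite ?addn0.
rewrite ltnS in ltrs; rewrite !eqSS (ltn_eqF ltrs) (ltn_eqF (leqW ltrs)) [s == _]eq_sym.
by case: (r.+1 == s); rewrite ?addn0.
Qed.

Lemma count_rcons_id (P : seq bool) a : count id (rcons P a) = count id P + a.
Proof. by rewrite -cats1 count_cat /= addn0. Qed.

Lemma nmeet_rcons P Q a b : size P = size Q ->
  nmeet (rcons P a) (rcons Q b) = nmeet P Q + (count id P + a == count id Q + b).
Proof.
move=> eqPQ; rewrite /nmeet size_rcons -[(size P).+1]addn1 iotaD count_cat /= addn0.
congr (_ + _).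
  apply: eq_in_count => i; rewrite mem_iota => /andP [_ ltiP].
  by rewrite -!cats1 !takel_cat //; lia.
by rewrite !take_oversize ?size_rcons -?eqPQ ?add1n // !count_rcons_id.
Qed.

Lemma big_tuple_rcons (T : finType) n (F : n.+1.-tuple T -> nat) :
  \sum_(t : n.+1.-tuple T) F t = \sum_(t : n.-tuple T) \sum_(x : T) F [tuple of rcons t x].
Proof.
rewrite pair_bigA /= (reindex (fun p : n.-tuple T * T => [tuple of rcons p.1 p.2])) //.
exists (fun t => ([tuple of belast (thead t) (behead t)], last (thead t) (behead t)));
  last by move=> t _; apply: val_inj; rewrite /= -lastI [in RHS](tuple_eta t).
move=> [t x] _; set u := [tuple of rcons t x].
have /rcons_inj [eqt ->] :
    rcons (belast (thead u) (behead u)) (last (thead u) (behead u)) = rcons t x.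
  by rewrite -lastI -[RHS]/(val u) [in RHS](tuple_eta u).
by congr (_, _); apply: val_inj.
Qed.

Lemma last_step_cond c1 c2 m (a b : bool) r s k :
  [&& c1 + a == r, c2 + b == s & m + (c1 + a == c2 + b) == k] =
  [&& a <= r, b <= s, c1 == r - a, c2 == s - b & m + (r == s) == k].
Proof.
apply/and3P/and5P => [[/eqP eqr /eqP eqs]|[ler les /eqP eqr /eqP eqs]].
  by rewrite eqr eqs => ->; split; apply/eqP; lia.
have -> : c1 + a = r by lia.
by have -> : c2 + b = s by lia.
Qed.

Lemma meet_pairs_offset n r s (e : bool) k :
  \sum_(P : n.-tuple bool) \sum_(Q : n.-tuple bool)
    [&& count id P == r, count id Q == s & nmeet P Q + e == k] =
  if e <= k then meet_pairs n r s (k - e) else 0.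
Proof.
case: leqP => [lek | ltk]; last by rewrite big1 // => P _; rewrite big1 // => Q _; case: e ltk; lia.
by apply: eq_bigr => P _; apply: eq_bigr => Q _; rewrite -(eqn_add2r e (nmeet P Q)) subnK.
Qed.

Lemma meet_pairsS n r s k : meet_pairs n.+1 r s k =
  \sum_(a : bool) \sum_(b : bool)
    ((a <= r) && (b <= s)) *
    (if (r == s) <= k then meet_pairs n (r - a) (s - b) (k - (r == s)) else 0).
Proof.
rewrite /meet_pairs big_tuple_rcons.
under eq_bigr => P _ do under eq_bigr => a _ do rewrite big_tuple_rcons exchange_big.
rewrite exchange_big; apply: eq_bigr => a _; rewrite exchange_big; apply: eq_bigr => b _.
under eq_bigr => P _ do under eq_bigr => Q _ do
  rewrite !count_rcons_id nmeet_rcons ?size_tuple // last_step_cond.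
case: (boolP (a <= r)) => [ler | gtr]; last by rewrite big1 // => P _; rewrite big1.
case: (boolP (b <= s)) => [les | gts].
  by rewrite mul1n -meet_pairs_offset.
by rewrite big1 // => P _; rewrite big1 // => Q _; rewrite andbF.
Qed.

Lemma meet_pairsE n r s k : meet_pairs n r s k = npairs n r s k.
Proof.
elim: n r s k => [|n IH] r s k.
  have tuple0 : xpredT =1 pred1 ([tuple] : 0.-tuple bool).
    by move=> t; apply/esym/eqP/val_inj; case: t => [[]].
  rewrite /meet_pairs !(big_pred1 _ tuple0) /=.
  by rewrite (eq_sym 0 r) (eq_sym 0 s) (eq_sym 0 k).
rewrite meet_pairsS !big_bool /= !IH !subn0 !subn1.
case: (eqVneq r s) => [<-|neq] /=.
  case: k => [|k] /=; first by rewrite !muln0.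
  by case: r => [|r] /=; rewrite subn1 /=; lia.
by case: r s neq => [|r] [|s] neq /=; rewrite subn0; lia.
Qed.

Lemma count_take_leq (P : seq bool) i : count id (take i P) <= i.
Proof. by rewrite (leq_trans (count_size _ _)) // size_take; case: ltnP => // /ltnW. Qed.

Lemma vtx_inj n (P Q : lpath n) i j : vtx P i = vtx Q j -> i = j.
Proof.
by rewrite /vtx => -[eqc eqd]; have := count_take_leq P i; have := count_take_leq Q j; lia.
Qed.

Lemma uniq_verts n (P : lpath n) : uniq (verts P).
Proof. by rewrite map_inj_in_uniq ?iota_uniq // => i j _ _; apply: vtx_inj. Qed.

Lemma mem_verts_vtx n (P Q : lpath n) i : i <= n ->
  (vtx P i \in verts Q) = (count id (take i P) == count id (take i Q)).
Proof.
move=> lein; apply/mapP/eqP => [[j _ eqPQ] | eqc].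
  by move: (eqPQ); rewrite -(vtx_inj eqPQ) /vtx => -[].
by exists i; rewrite ?mem_iota ?ltnS // /vtx eqc.
Qed.

Lemma vtx_eq0 n (P : lpath n) i : (vtx P i == (0, 0)) = (i == 0).
Proof.
rewrite /vtx; apply/eqP/eqP => [[eqc eqd] | ->]; last by rewrite take0.
by have := count_take_leq P i; lia.
Qed.

Lemma vtx_eq_end n (P : lpath n) r i : ends_at P r -> i <= n ->
  (vtx P i == (r, n - r)) = (i == n).
Proof.
rewrite /ends_at /vtx => /eqP endP lein; apply/eqP/eqP => [[eqc eqd] | ->].
  have : r <= n by rewrite -endP -[X in _ <= X](size_tuple P) count_size.
  by have := count_take_leq P i; lia.
by rewrite take_oversize ?size_tuple // endP.
Qed.

Lemma shared_count n (P Q : lpath n) excl : shared P Q excl =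
  count (fun i => (vtx P i \in verts Q) && (vtx P i \notin excl)) (iota 0 n.+1).
Proof. by rewrite /shared undup_id ?uniq_verts // size_filter count_map. Qed.

Lemma shared_origin n (P Q : lpath n) : shared P Q [:: (0, 0)] = nmeet P Q.
Proof.
rewrite shared_count /nmeet size_tuple -add1n iotaD /= mem_seq1 vtx_eq0 andbF add0n.
apply: eq_in_count => i; rewrite mem_iota => /andP [gt0i ltin].
by rewrite mem_verts_vtx ?mem_seq1 ?vtx_eq0 ?(gtn_eqF gt0i) ?andbT //; lia.
Qed.

(* For paths with a common endpoint, the last vertex is always shared. *)
Lemma shared_ends n (P Q : lpath n) r : ends_at P r -> ends_at Q r -> 0 < n ->
  shared P Q [:: (0, 0); (r, n - r)] = (nmeet P Q).-1.
Proof.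
move=> endP endQ gt0n.
rewrite shared_count /nmeet size_tuple -add1n iotaD /= !inE vtx_eq0 andbF add0n.
have -> : iota 1 n = iota 1 n.-1 ++ [:: n].
  by rewrite -{1}(prednK gt0n) -[n.-1.+1]addn1 iotaD add1n prednK.
rewrite !count_cat /= !addn0 !take_oversize ?size_tuple // (eqP endP) (eqP endQ) eqxx addn1 /=.
rewrite mem_verts_vtx // !inE vtx_eq0 (vtx_eq_end endP) // eqxx orbT andbF addn0.
apply: eq_in_count => i; rewrite mem_iota => /andP [gt0i ltin].
have ltin' : i < n by lia.
have lein := ltnW ltin'.
by rewrite mem_verts_vtx // !inE vtx_eq0 (vtx_eq_end endP) // (gtn_eqF gt0i) (ltn_eqF ltin') andbT.
Qed.

Lemma card_set_pairs (T : finType) (p : T -> T -> bool) :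
  #|[set PQ : T * T | p PQ.1 PQ.2]| = \sum_(P : T) \sum_(Q : T) p P Q.
Proof.
rewrite pair_bigA -sum1_card big_mkcond /=.
by apply: eq_bigr => PQ _; rewrite inE; case: (p _ _).
Qed.

Lemma nmeet_gt0 n (P Q : lpath n) : count id P = count id Q -> 0 < n -> 0 < nmeet P Q.
Proof.
move=> eqc gt0n; rewrite /nmeet size_tuple -has_count; apply/hasP; exists n.
  by rewrite mem_iota; lia.
by rewrite !take_oversize ?size_tuple // eqc.
Qed.

Lemma Mcount_offdiag n r s k : r < s -> Mcount n r s k = meet_pairs n r s k.
Proof.
move=> ltrs; rewrite /Mcount ltrs (card_set_pairs (fun P Q =>
  [&& ends_at P r, ends_at Q s & shared P Q [:: (0, 0)] == k])) /meet_pairs.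
by apply: eq_bigr => P _; apply: eq_bigr => Q _; rewrite shared_origin.
Qed.

Lemma Mcount_diag n r k : 0 < n -> 0 < k -> Mcount n r r k = meet_pairs n r r k.
Proof.
move=> gt0n gt0k; rewrite /Mcount ltnn /Ncount (card_set_pairs (fun P Q =>
  [&& ends_at P r, ends_at Q r & shared P Q [:: (0, 0); (r, n - r)] == k.-1])) /meet_pairs.
apply: eq_bigr => P _; apply: eq_bigr => Q _; rewrite /ends_at.
case: (eqVneq (count id P) r) => //= eqPr; case: (eqVneq (count id Q) r) => //= eqQr.
rewrite (shared_ends (introT eqP eqPr) (introT eqP eqQr) gt0n) /=.
have := nmeet_gt0 (etrans eqPr (esym eqQr)) gt0n.
by case: (nmeet P Q) => // m _; case: k gt0k.
Qed.

Local Open Scope ring_scope.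

Lemma subzS (n : nat) : n.+1%:Z - 1 = n.
Proof. by rewrite -addn1 PoszD addrK. Qed.

Section ShiftAction.
Variable R : comNzRingType.
Implicit Types (p q : {mpoly R[3]}) (v w : int -> int -> int -> R) (a b c : int).

Definition mshift p v a b c : R :=
  \sum_(m <- msupp p) p@_m * v (a - (m 0)%:Z) (b - (m 1)%:Z) (c - (m 2)%:Z).

Lemma mshift_supp p (S : seq 'X_{1..3}) v a b c : uniq S -> {subset msupp p <= S} ->
  mshift p v a b c = \sum_(m <- S) p@_m * v (a - (m 0)%:Z) (b - (m 1)%:Z) (c - (m 2)%:Z).
Proof.
move=> uS sub; rewrite /mshift [RHS](bigID (mem (msupp p))) /=.
rewrite [X in _ = _ + X]big1 ?addr0 => [|m /memN_msupp_eq0 ->]; last by rewrite mul0r.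
rewrite -[RHS]big_filter; apply: perm_big; apply: uniq_perm; rewrite ?msupp_uniq ?filter_uniq //.
by move=> m; rewrite mem_filter; case: (boolP (m \in msupp p)) => // /sub ->.
Qed.

Lemma mshift0 v a b c : mshift 0 v a b c = 0.
Proof. by rewrite /mshift msupp0 big_nil. Qed.

Lemma mshiftD p q v a b c : mshift (p + q) v a b c = mshift p v a b c + mshift q v a b c.
Proof.
have uS := undup_uniq (msupp p ++ msupp q).
rewrite (@mshift_supp (p + q) _ v a b c uS) => [|m /msuppD_le]; last by rewrite mem_undup.
rewrite (@mshift_supp p _ v a b c uS) => [|m mp]; last by rewrite mem_undup mem_cat mp.
rewrite (@mshift_supp q _ v a b c uS) => [|m mq]; last by rewrite mem_undup mem_cat mq orbT.
by rewrite -big_split; apply: eq_bigr => m _; rewrite mcoeffD mulrDl.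
Qed.

Lemma mshiftZ x p v a b c : mshift (x *: p) v a b c = x * mshift p v a b c.
Proof.
rewrite (@mshift_supp (x *: p) _ v a b c (msupp_uniq p)) ?mulr_sumr; last exact: msuppZ_le.
by apply: eq_bigr => m _; rewrite mcoeffZ mulrA.
Qed.

Lemma mshiftN p v a b c : mshift (- p) v a b c = - mshift p v a b c.
Proof. by rewrite -scaleN1r mshiftZ mulN1r. Qed.

Lemma mshiftB p q v a b c : mshift (p - q) v a b c = mshift p v a b c - mshift q v a b c.
Proof. by rewrite mshiftD mshiftN. Qed.

Lemma mshiftMn p k v a b c : mshift (p *+ k) v a b c = mshift p v a b c *+ k.
Proof. by elim: k => [|k IH]; rewrite ?mulr0n ?mshift0 // !mulrS mshiftD IH. Qed.

Lemma mshift_sum I (s : seq I) (P : pred I) (F : I -> {mpoly R[3]}) v a b c :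
  mshift (\sum_(i <- s | P i) F i) v a b c = \sum_(i <- s | P i) mshift (F i) v a b c.
Proof.
elim: s => [|i s IH]; first by rewrite !big_nil mshift0.
by rewrite !big_cons; case: (P i); rewrite ?mshiftD IH.
Qed.

Lemma mshiftX m v a b c :
  mshift 'X_[m] v a b c = v (a - (m 0)%:Z) (b - (m 1)%:Z) (c - (m 2)%:Z).
Proof. by rewrite /mshift msuppX big_seq1 mcoeffX eqxx mul1r. Qed.

Lemma eq_mshift p v w : (forall a b c, v a b c = w a b c) ->
  forall a b c, mshift p v a b c = mshift p w a b c.
Proof. by move=> e a b c; apply: eq_bigr => m _; rewrite e. Qed.

Lemma mshiftXM m q v a b c :
  mshift ('X_[m] * q) v a b c = mshift 'X_[m] (mshift q v) a b c.
Proof.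
elim/mpolyind: q a b c => [|x m' q _ _ IH] a b c; first by rewrite mulr0 mshift0 mshiftX mshift0.
rewrite mulrDr mshiftD IH -scalerAr mshiftZ -mpolyXD !mshiftX mshiftD mshiftZ mshiftX.
by rewrite !mnmDE !PoszD !opprD !addrA [_ - (m 0)%:Z - _]addrAC [_ - (m 1)%:Z - _]addrAC
  [_ - (m 2)%:Z - _]addrAC.
Qed.

Lemma mshiftM p q v a b c : mshift (p * q) v a b c = mshift p (mshift q v) a b c.
Proof.
elim/mpolyind: p a b c => [|x m p _ _ IH] a b c; first by rewrite mul0r !mshift0.
by rewrite mulrDl mshiftD IH -scalerAl mshiftZ mshiftXM mshiftD mshiftZ.
Qed.

Lemma mshift1 v a b c : mshift 1 v a b c = v a b c.
Proof. by rewrite -mpolyX0 mshiftX !mnm0E !subr0. Qed.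

Lemma mshift_signM i p v a b c : mshift ((-1) ^+ i * p) v a b c = (-1) ^+ i * mshift p v a b c.
Proof.
by elim: i => [|i IH]; rewrite ?expr0 ?mul1r // !exprS -!mulrA !mulN1r mshiftN IH.
Qed.

Lemma mshiftXn (i : 'I_3) k v a b c : mshift ('X_i ^+ k) v a b c =
  v (a - ((i == 0) * k)%:Z) (b - ((i == 1) * k)%:Z) (c - ((i == 2) * k)%:Z).
Proof. by rewrite mpolyXn mshiftX !mulmnE !mnm1E. Qed.

Lemma mshift_annihilate p q v : (forall a b c, mshift q v a b c = 0) ->
  forall a b c, mshift (p * q) v a b c = 0.
Proof.
move=> qv0 a b c; rewrite mshiftM (eq_mshift _ qv0).
by apply: big1 => m _; rewrite mulr0.
Qed.

End ShiftAction.

Definition Xn : {mpoly rat[3]} := 'X_0.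
Definition Xr : {mpoly rat[3]} := 'X_1.
Definition Xs : {mpoly rat[3]} := 'X_2.

Lemma mshift_Xn k v a b c : mshift (Xn ^+ k) v a b c = v (a - k%:Z) b c.
Proof. by rewrite mshiftXn /= mul1n !mul0n !subr0. Qed.

Lemma mshift_Xr k v a b c : mshift (Xr ^+ k) v a b c = v a (b - k%:Z) c.
Proof. by rewrite mshiftXn /= mul1n !mul0n !subr0. Qed.

Lemma mshift_Xs k v a b c : mshift (Xs ^+ k) v a b c = v a b (c - k%:Z).
Proof. by rewrite mshiftXn /= mul1n !mul0n !subr0. Qed.

(* The binomial coefficient extended to a negative upper index by
   [C(-m, a) = (-1)^a C(a + m - 1, a)], so that Pascal's rule holds on all of [Z^2]. *)
Definition gbin (N a : int) : rat :=
  if a < 0 then 0 else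
  if 0 <= N then 'C(`|N|, `|a|)%:R
  else (-1) ^+ `|a| * 'C(`|a| + `|N| - 1, `|a|)%:R.

Lemma gbin_pascal N a : gbin N a = gbin (N - 1) a + gbin (N - 1) (a - 1).
Proof.
rewrite /gbin; case: a => [[|A]|A].
- by rewrite /= !bin0 !expr0 !mul1r; case: ifP; case: ifP; rewrite addr0.
- rewrite subzS; case: N => [[|M]|M].
  + by rewrite /= bin0n !addnK !binn !mulr1 exprS mulN1r addNr.
  + by rewrite subzS /= binS natrD.
  + have -> : Negz M - 1 = Negz M.+1 by rewrite !NegzE -opprD -PoszD addn1.
    by rewrite /= !subn1 !addSn !addnS /= (binS (A + M).+1 A) natrD exprS; ring.
- by rewrite /= addr0.
Qed.

Lemma gbin_nat (N a : nat) : gbin N a = 'C(N, a)%:R.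
Proof. by []. Qed.

Lemma gbin_neg N a : a < 0 -> gbin N a = 0.
Proof. by rewrite /gbin => ->. Qed.

Definition lgv (n r s : int) : rat :=
  gbin (n - 1) r * gbin (n - 1) (s - 1) - gbin (n - 1) (r - 1) * gbin (n - 1) s.

Lemma lgv_pascal n r s : lgv n r s =
  lgv (n - 1) r s + lgv (n - 1) (r - 1) s + lgv (n - 1) r (s - 1) + lgv (n - 1) (r - 1) (s - 1).
Proof.
by rewrite /lgv (gbin_pascal (n - 1) r) (gbin_pascal (n - 1) (s - 1))
  (gbin_pascal (n - 1) (r - 1)) (gbin_pascal (n - 1) s); ring.
Qed.

Lemma lgv_diag n r : lgv n r r = 0.
Proof. by rewrite /lgv mulrC subrr. Qed.

Lemma lgv_neg n r s : (r < 0) || (s < 0) -> lgv n r s = 0.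
Proof.
case/orP => neg; rewrite /lgv (gbin_neg _ neg).
  by rewrite [gbin _ (r - 1)]gbin_neg ?mul0r ?subrr //; lia.
by rewrite [gbin _ (s - 1)]gbin_neg ?mulr0 ?subrr //; lia.
Qed.

Definition pascal_pol : {mpoly rat[3]} := Xn * (1 + Xr) * (1 + Xs).

Lemma mshift_pascal_pol v a b c : mshift pascal_pol v a b c =
  v (a - 1) b c + v (a - 1) (b - 1) c + v (a - 1) b (c - 1) + v (a - 1) (b - 1) (c - 1).
Proof.
have -> : pascal_pol = Xn + Xn * Xr + Xn * Xs + Xn * Xr * Xs by rewrite /pascal_pol; ring.
by rewrite !mshiftD !mshiftM -[Xn]expr1 -[Xr]expr1 -[Xs]expr1 !(mshift_Xn, mshift_Xr, mshift_Xs).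
Qed.

Lemma mshift_pascal_lgv a b c : mshift pascal_pol lgv a b c = lgv a b c.
Proof. by rewrite mshift_pascal_pol [RHS]lgv_pascal. Qed.

Lemma mshift_lgv_pascal p n r s : mshift p lgv n r s = mshift p lgv (n - 1) r s
  + mshift p lgv (n - 1) (r - 1) s + mshift p lgv (n - 1) r (s - 1)
  + mshift p lgv (n - 1) (r - 1) (s - 1).
Proof.
rewrite -mshift_pascal_pol -mshiftM mulrC mshiftM.
by apply: eq_mshift => a b c; rewrite mshift_pascal_lgv.
Qed.

Definition polA : {mpoly rat[3]} := 1 + Xn * Xr - Xn * Xs.
Definition polB : {mpoly rat[3]} := 1 - Xn * Xr - Xn * Xs.
Definition polC : {mpoly rat[3]} := Xn * (1 + Xr * Xs).
Definition polT : {mpoly rat[3]} := Xn * (1 + 2%:R * Xr + Xr * Xs).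

Lemma mshift_lgv_ABC k a b c :
  mshift (polA ^+ k - polB ^+ k + polC ^+ k) lgv a b c = mshift (polT ^+ k) lgv a b c.
Proof.
have -> : polA ^+ k - polB ^+ k + polC ^+ k =
    polT ^+ k + ((polA ^+ k - polT ^+ k) - (polB ^+ k - polC ^+ k)) by ring.
rewrite !subrXX.
have -> : polA - polT = 1 - pascal_pol by rewrite /polA /polT /pascal_pol; ring.
have -> : polB - polC = 1 - pascal_pol by rewrite /polB /polC /pascal_pol; ring.
rewrite -mulrBr mulrC mshiftD mshift_annihilate ?addr0 // => x y z.
by rewrite mshiftB mshift1 mshift_pascal_lgv subrr.
Qed.

Lemma mshift_polT v a b c : mshift polT v a b c =
  v (a - 1) b c + 2%:R * v (a - 1) (b - 1) c + v (a - 1) (b - 1) (c - 1).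
Proof.
have -> : polT = Xn + 2%:R *: (Xn * Xr) + Xn * Xr * Xs by rewrite /polT -mul_mpolyC; ring.
by rewrite !mshiftD mshiftZ !mshiftM -[Xn]expr1 -[Xr]expr1 -[Xs]expr1
  !(mshift_Xn, mshift_Xr, mshift_Xs).
Qed.

Lemma mshift_lgv_neg p n r s : (r < 0) || (s < 0) -> mshift p lgv n r s = 0.
Proof. by move=> neg; apply: big1 => m _; rewrite lgv_neg ?mulr0 //; lia. Qed.

Lemma mshift_polTS k v n r s : mshift (polT ^+ k.+1) v n r s = mshift (polT ^+ k) v (n - 1) r s
  + 2%:R * mshift (polT ^+ k) v (n - 1) (r - 1) s + mshift (polT ^+ k) v (n - 1) (r - 1) (s - 1).
Proof. by rewrite exprS mshiftM mshift_polT. Qed.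

Lemma mshift_polT_top m (r s : nat) : (r < s)%N ->
  mshift (polT ^+ m) lgv m.+1 r s = (if s == r.+1 then 'C(m, r) else 0)%N%:R.
Proof.
elim: m r s => [|m IH] r s ltrs.
  rewrite mshift1 /lgv subrr; case: s ltrs => [|s] // ltrs; rewrite subzS.
  case: r ltrs => [|r] ltrs.
    by rewrite [gbin 0 (0 - 1)]gbin_neg // mul0r subr0 !gbin_nat; case: s {ltrs}.
  rewrite subzS !gbin_nat /= bin0n mulr0 subr0.
  by case: s ltrs => [|s] //= ltrs; rewrite mul0r; case: ifP.
rewrite mshift_polTS subzS IH //.
case: r ltrs => [|r] ltrs; first by rewrite !mshift_lgv_neg ?mulr0 ?addr0 //= ?bin0.
case: s ltrs => [|s] // ltrs.
rewrite !subzS IH 1?ltnW // IH // (gtn_eqF ltrs) mulr0 addr0 eqSS.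
by case: ifP => _; rewrite ?addr0 // -natrD binS.
Qed.

Section NpairsStep.
Variable n : nat.
Hypothesis IH : forall r s k, (r <= s)%N -> (k < n)%N ->
  (npairs n r s k)%:R = mshift (polT ^+ k) lgv n r s.

Lemma npairsS_offdiag r s k : (r < s)%N -> (k < n)%N ->
  (npairs n.+1 r s k)%:R = mshift (polT ^+ k) lgv n.+1 r s.
Proof.
move=> ltrs ltkn; rewrite /= (ltn_eqF ltrs) /= mshift_lgv_pascal subzS !natrD.
congr (_ + _ + _ + _); first exact: IH (ltnW ltrs) ltkn.
- case: r ltrs => [|r] ltrs; first by rewrite mshift_lgv_neg.
  by rewrite subzS IH // ltnW // ltnW.
- by case: s ltrs => [|s] // ltrs; rewrite subzS IH.
- case: r ltrs => [|r] ltrs; first by rewrite mshift_lgv_neg.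
  by case: s ltrs => [|s] // ltrs; rewrite !subzS IH // ltnW.
Qed.

Lemma npairsS_diag r k : (k < n)%N ->
  (npairs n.+1 r r k.+1)%:R = mshift (polT ^+ k.+1) lgv n.+1 r r.
Proof.
move=> ltkn; rewrite /= eqxx /= mshift_polTS subzS.
case: r => [|r]; first by rewrite !addn0 !(@mshift_lgv_neg _ _ (0 - 1)) // mulr0 !addr0 IH.
by rewrite subzS (npairsC n r.+1 r) !natrD !IH //; ring.
Qed.

End NpairsStep.

Lemma npairs_mshift n r s k : (r <= s)%N -> (k < n)%N ->
  (npairs n r s k)%:R = mshift (polT ^+ k) lgv n r s.
Proof.
elim: n r s k => // n IH r s k les ltkn.
case: (ltngtP r s) les => // [ltrs | <-] _.
  move: ltkn; rewrite ltnS leq_eqVlt => /predU1P [-> | ltkn]; last exact: npairsS_offdiag.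
  by rewrite npairsS_top // mshift_polT_top.
case: k ltkn => [|k] ltkn; first by rewrite npairs_diag0 // mshift1 lgv_diag.
exact: npairsS_diag.
Qed.

Lemma binz_nat (a b : nat) : binz a b = 'C(a, b)%:R.
Proof. by []. Qed.

Lemma binz_neg (a b : int) : b < 0 -> binz a b = 0.
Proof. by rewrite /binz => /lt_geF ->; rewrite andbF. Qed.

Lemma lgv_nat m (A B : nat) :
  lgv m.+1 A B = (B%:R - A%:R) / m.+1%:R * 'C(m.+1, B)%:R * 'C(m.+1, A)%:R.
Proof.
have down (X : nat) : m.+1%:R * gbin m X = (m.+1%:R - X%:R) * 'C(m.+1, X)%:R :> rat.
  rewrite gbin_nat; case: (leqP X m.+1) => leX; first by rewrite -natrB // -!natrM mul_bin_down.
  by rewrite !bin_small ?mulr0 //; lia.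
have diag (X : nat) : m.+1%:R * gbin m (X%:Z - 1) = X%:R * 'C(m.+1, X)%:R :> rat.
  case: X => [|X]; first by rewrite gbin_neg ?mulr0 ?mul0r.
  by rewrite [X.+1%:Z - 1]subzS gbin_nat -!natrM mul_bin_diag.
have m1_neq0 : m.+1%:R != 0 :> rat by rewrite pnatr_eq0.
apply: (mulfI m1_neq0); apply: (mulfI m1_neq0).
rewrite /lgv subzS.
have -> : forall x y z w : rat, m.+1%:R * (m.+1%:R * (x * y - z * w)) =
  (m.+1%:R * x) * (m.+1%:R * y) - (m.+1%:R * z) * (m.+1%:R * w) by move=> *; ring.
rewrite !down !diag; field; by rewrite addrC natr1.
Qed.

Lemma lgv_binz (M a b : int) : 0 < M ->
  lgv M a b = (b - a)%:~R / M%:~R * binz M b * binz M a.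
Proof.
case: M => [[|m]|m] // _.
case: a => [A|A]; last by rewrite lgv_neg // (@binz_neg _ (Negz A)) // mulr0.
case: b => [B|B]; last by rewrite lgv_neg ?orbT // (@binz_neg _ (Negz B)) // mulr0 mul0r.
by rewrite lgv_nat !binz_nat intrB !pmulrn.
Qed.

Definition polU : {mpoly rat[3]} := 1 - Xn * Xs.
Definition polV : {mpoly rat[3]} := Xn * Xr.

Lemma mshift_polVU i m v n r s : mshift (polV ^+ i * polU ^+ m) v n r s =
  \sum_(j < m.+1) (-1) ^+ j * 'C(m, j)%:R * v (n - i%:Z - j%:Z) (r - i%:Z) (s - j%:Z).
Proof.
rewrite mshiftM exprMn mshiftM mshift_Xn mshift_Xr /polU exprDn mshift_sum.
apply: eq_bigr => j _; rewrite expr1n mul1r mshiftMn (exprNn (Xn * Xs)) mshift_signM exprMn mshiftM.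
by rewrite mshift_Xn mshift_Xs mulr_natr mulrnAl.
Qed.

Lemma mshift_polAB k v n r s : mshift (polA ^+ k - polB ^+ k) v n r s =
  \sum_(i < k.+1) (1 - (-1) ^+ i) * 'C(k, i)%:R * mshift (polV ^+ i * polU ^+ (k - i)) v n r s.
Proof.
have -> : polA = polU + polV by rewrite /polA /polU /polV; ring.
have -> : polB = polU + - polV by rewrite /polB /polU /polV; ring.
rewrite !exprDn -sumrB mshift_sum; apply: eq_bigr => i _.
rewrite -mshiftZ -mul_mpolyC rmorphM rmorphB rmorph1 rmorphXn rmorphN rmorph1 rmorph_nat.
by congr mshift; rewrite exprNn; ring.
Qed.

Lemma mshift_polC k v n r s :
  mshift (polC ^+ k) v n r s = \sum_(j < k.+1) 'C(k, j)%:R * v (n - k%:Z) (r - j%:Z) (s - j%:Z).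
Proof.
rewrite exprMn mshiftM mshift_Xn exprDn mshift_sum; apply: eq_bigr => j _.
by rewrite expr1n mul1r mshiftMn exprMn mshiftM mshift_Xr mshift_Xs mulr_natl.
Qed.

Lemma big_ord_truncate (V : nmodType) (N M : nat) (f : nat -> V) : (M <= N)%N ->
  (forall j, (M <= j)%N -> f j = 0) -> \sum_(j < N) f j = \sum_(j < M) f j.
Proof.
move=> leMN f0; rewrite [RHS](big_ord_widen _ _ leMN) [RHS]big_mkcond /=.
by apply: eq_bigr => j _; case: ltnP => // /f0 ->.
Qed.

Lemma big_ord_pairs (V : nmodType) N (g : nat -> V) :
  \sum_(i < 2 * N) g i = \sum_(t < N) (g (2 * t)%N + g (2 * t).+1).
Proof.
elim: N => [|N IH]; first by rewrite !big_ord0.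
by rewrite (_ : 2 * N.+1 = (2 * N).+2)%N ?big_ord_recr //= ?IH ?addrA //; lia.
Qed.

Definition odd_summand (n r s k t j : nat) : rat :=
  (-1) ^+ j
  * ((s%:Z - j%:Z - r%:Z + 1 + 2 * t%:Z)%:~R / (n%:Z - 1 - j%:Z - 2 * t%:Z)%:~R)
  * binz k%:Z (2 * t%:Z + 1)
  * binz (k%:Z - 1 - 2 * t%:Z) j%:Z
  * binz (n%:Z - 1 - j%:Z - 2 * t%:Z) (s%:Z - j%:Z)
  * binz (n%:Z - 1 - j%:Z - 2 * t%:Z) (r%:Z - 1 - 2 * t%:Z).

Lemma sum_odd_summand (n r s k t : nat) : (k < n)%N ->
  \sum_(j < n.+1) odd_summand n r s k t j =
  'C(k, (2 * t).+1)%:R * mshift (polV ^+ (2 * t).+1 * polU ^+ (k - (2 * t).+1)) lgv n r s.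
Proof.
have oddE : 2 * t%:Z + 1 = (2 * t).+1 by lia.
move=> ltkn; case: (leqP (2 * t).+1 k) => leik; last first.
  rewrite bin_small // mul0r big1 // => j _.
  by rewrite /odd_summand oddE binz_nat bin_small // mulr0 !mul0r.
have topE : k%:Z - 1 - 2 * t%:Z = (k - (2 * t).+1)%N by lia.
rewrite (@big_ord_truncate _ _ (k - (2 * t).+1).+1 (odd_summand n r s k t)) => [||j lej].
- rewrite mshift_polVU mulr_sumr; apply: eq_bigr => -[j /= lej] _.
  rewrite /odd_summand oddE topE !binz_nat lgv_binz; last by lia.
  have -> : n%:Z - Posz (2 * t).+1 - j%:Z = n%:Z - 1 - j%:Z - 2 * t%:Z by lia.
  have -> : r%:Z - Posz (2 * t).+1 = r%:Z - 1 - 2 * t%:Z by lia.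
  have -> : s%:Z - j%:Z - (r%:Z - 1 - 2 * t%:Z) = s%:Z - j%:Z - r%:Z + 1 + 2 * t%:Z by lia.
  by ring.
- lia.
- by rewrite /odd_summand topE binz_nat bin_small ?mulr0 ?mul0r //; lia.
Qed.

Lemma sum_odd_summand_mshift n r s k : (k < n)%N ->
  2 * \sum_(t < n.+1) \sum_(j < n.+1) odd_summand n r s k t j =
  mshift (polA ^+ k - polB ^+ k) lgv n r s.
Proof.
move=> ltkn; under eq_bigr => t _ do rewrite sum_odd_summand //.
pose g i := (1 - (-1) ^+ i) * 'C(k, i)%:R * mshift (polV ^+ i * polU ^+ (k - i)) lgv n r s.
rewrite mshift_polAB -[RHS]/(\sum_(i < k.+1) g i).
rewrite -(@big_ord_truncate _ (2 * n.+1) k.+1 g) => [||i ltki]; first last.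
- by rewrite /g bin_small // mulr0 mul0r.
- by clear g; lia.
rewrite big_ord_pairs mulr_sumr; apply: eq_bigr => t _.
rewrite /g -[(-1) ^+ (2 * t)%N]signr_odd -[(-1) ^+ (2 * t).+1]signr_odd /= oddM /=.
by rewrite subrr !mul0r add0r opprK; ring.
Qed.

Definition tail_summand (n r s k j : nat) : rat :=
  binz k%:Z j%:Z * binz (n%:Z - k%:Z) (r%:Z - j%:Z) * binz (n%:Z - k%:Z) (s%:Z - j%:Z).

Lemma sum_tail_summand_mshift (n r s k : nat) : (k < n)%N ->
  (s%:Z - r%:Z)%:~R / (n%:Z - k%:Z)%:~R * \sum_(j < n.+1) tail_summand n r s k j =
  mshift (polC ^+ k) lgv n r s.
Proof.
move=> ltkn; rewrite mshift_polC (@big_ord_truncate _ _ k.+1 (tail_summand n r s k)) => [||j ltkj].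
- rewrite mulr_sumr; apply: eq_bigr => j _; rewrite /tail_summand binz_nat lgv_binz; last by lia.
  have -> : s%:Z - j%:Z - (r%:Z - j%:Z) = s%:Z - r%:Z by ring.
  by ring.
- by rewrite ltnS ltnW.
- by rewrite /tail_summand binz_nat bin_small // !mul0r.
Qed.

Lemma Mcount_mshift n r s k : (r <= s)%N -> (k < n)%N -> (r < s)%N || (0 < k)%N ->
  (Mcount n r s k)%:R = mshift (polT ^+ k) lgv n r s.
Proof.
move=> les ltkn; rewrite -npairs_mshift // -meet_pairsE.
case: (ltngtP r s) les => // [ltrs | <-] _ /= gt0k; first by rewrite Mcount_offdiag.
by rewrite Mcount_diag //; lia.
Qed.

Theorem theorem2 (n r s k : nat) :
  (1 <= n)%N -> (r <= s)%N -> (s <= n)%N -> (k <= n - 1)%N ->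
  (r = s -> 1 <= k)%N ->
  ((Mcount n r s k)%:R : rat) =
    2 * (\sum_(t < n.+1) \sum_(j < n.+1)
          (-1) ^+ j
          * ((s%:Z - j%:Z - r%:Z + 1 + 2 * t%:Z)%:~R
             / (n%:Z - 1 - j%:Z - 2 * t%:Z)%:~R)
          * binz k%:Z (2 * t%:Z + 1)
          * binz (k%:Z - 1 - 2 * t%:Z) j%:Z
          * binz (n%:Z - 1 - j%:Z - 2 * t%:Z) (s%:Z - j%:Z)
          * binz (n%:Z - 1 - j%:Z - 2 * t%:Z) (r%:Z - 1 - 2 * t%:Z))
    + ((s%:Z - r%:Z)%:~R / (n%:Z - k%:Z)%:~R)
      * (\sum_(j < n.+1)
           binz k%:Z j%:Z * binz (n%:Z - k%:Z) (r%:Z - j%:Z)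
           * binz (n%:Z - k%:Z) (s%:Z - j%:Z))
  /\ ((r < s)%N ->
      ((Mcount n r s 0)%:R : rat) =
        (s%:Z - r%:Z)%:~R / n%:R * ('C(n, r))%:R * ('C(n, s))%:R).
Proof.
move=> ge1n les _ lekn diag_k; have ltkn : (k < n)%N by lia.
split=> [|ltrs].
  have range_k : (r < s)%N || (0 < k)%N by case: ltngtP les => // eqrs _; rewrite diag_k ?orbT.
  rewrite Mcount_mshift // -mshift_lgv_ABC mshiftD.
  by rewrite -(sum_odd_summand_mshift r s ltkn) -(sum_tail_summand_mshift r s ltkn).
by rewrite Mcount_mshift ?ltrs // mshift1 lgv_binz ?ltz_nat // !binz_nat pmulrn; ring.
Qed.
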